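(* Let $s\ge 1$, integers $0=m_0<m_1<\cdots<m_s$ and $n_0>n_1>\cdots>n_s=0$, let $\mathsf T$ be the initial segment determined by $\bm E=(y^{n_0},x^{m_1}y^{n_1},\dots,x^{m_{s-1}}y^{n_{s-1}},x^{m_s})$, and let $\mathsf S=(\{0,\dots,m_s-1\}\times\{0,\dots,n_0-1\})\setminus\mathsf T$. For $i=1,\dots,s-1$ let $h_i=2^{\mathrm{val}_2(i)}$, $\ell_i=\min(h_i,s-i)$ and $$\mathsf R_i=\{m_i,\dots,m_{i+\ell_i}-1\}\times\{n_i,\dots,n_{i-h_i}-1\}.$$ Then $i+\ell_i\le s$ and $i-h_i\ge 0$ for all $i$, the rectangles $\mathsf R_1,\dots,\mathsf R_{s-1}$ are pairwise disjoint, and their union is exactly $\mathsf S$.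
   Context: $\mathrm{val}_2(i)$ denotes the $2$-adic valuation of the positive integer $i$. The initial segment determined by a list of monomials $\bm E$ is the set of $(u,v)\in\mathbb N^2$ such that $x^uy^v$ is not in the monomial ideal generated by $\bm E$; here $\mathsf T=\{(u,v): \text{for the unique } k \text{ with } m_k\le u<m_{k+1},\ v<n_k\}$ restricted to $u<m_s$. *)

From mathcomp Require Import all_boot.

Set Implicit Arguments.
Unset Strict Implicit.
Unset Printing Implicit Defensive.

Definition val2 (i : nat) : nat := logn 2 i.

Definition hh (i : nat) : nat := 2 ^ val2 i.

Definition ll (s i : nat) : nat := minn (hh i) (s - i).

(* The monomial x^u y^v lies in the monomial ideal generated by
   E = (x^{m_0} y^{n_0}, ..., x^{m_s} y^{n_s}) (with m_0 = 0, n_s = 0)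
   iff it is divisible by some generator x^{m_k} y^{n_k}, k = 0..s. *)
Definition in_ideal (s : nat) (m n : nat -> nat) (u v : nat) : Prop :=
  exists k, k <= s /\ m k <= u /\ n k <= v.

Definition inT (s : nat) (m n : nat -> nat) (u v : nat) : Prop :=
  ~ in_ideal s m n u v.

Definition inS (s : nat) (m n : nat -> nat) (u v : nat) : Prop :=
  u < m s /\ v < n 0 /\ ~ inT s m n u v.

Definition inR (s : nat) (m n : nat -> nat) (i u v : nat) : Prop :=
  m i <= u < m (i + ll s i) /\ n i <= v < n (i - hh i).

(* Cut the box [0, m_s) x [0, n_0) into the cells [m_a, m_(a+1)) x [n_b, n_(b-1))
   with 0 <= a < s and 0 < b <= s.  A cell lies in S iff b <= a, and it lies in R_i
   iff i <= a < i + l_i and i - h_i < b <= i.  So everything reduces to the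
   triangle 1 <= b <= a < s: every interval [b, a] of positive integers contains
   exactly one i with i - h_i < b and a < i + h_i.  An element of maximal 2-adic
   valuation works, since i - h_i and i + h_i have larger valuation; two such i < j
   would both be divisible by min(h_i, h_j), although j - i is smaller than it. *)

From mathcomp Require Import all_boot zify.

Set Implicit Arguments.
Unset Strict Implicit.
Unset Printing Implicit Defensive.

Lemma hh_dvdn i : hh i %| i.
Proof. exact: pfactor_dvdnn. Qed.

Lemma hh_le i : 0 < i -> hh i <= i.
Proof. by move=> i_gt0; apply: dvdn_leq (hh_dvdn i). Qed.

Lemma hh_dvdn_of_val2 i j : val2 i <= val2 j -> hh i %| j.
Proof. by move=> le_ij; apply: dvdn_trans (dvdn_exp2l 2 le_ij) (hh_dvdn j). Qed.

Lemma ltn_val2_dvdn j k : 0 < k -> 2 * hh j %| k -> val2 j < val2 k.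
Proof. by move=> k_gt0; rewrite -expnS pfactor_dvdn. Qed.

(* Writing j = q 2^t with q odd, j + 2^t = (q + 1) 2^t with q + 1 even. *)
Lemma dvdn_double_hh_addr j : 0 < j -> 2 * hh j %| j + hh j.
Proof.
move=> j_gt0; have [q coprime_2q def_j] := pfactor_coprime (isT : prime 2) j_gt0.
rewrite /hh /val2 in def_j *; set t := logn 2 j in def_j *.
have -> : j + 2 ^ t = q.+1 * 2 ^ t by rewrite {1}def_j mulSn addnC.
by rewrite dvdn_pmul2r ?expn_gt0 // dvdn2 /= negbK -coprime2n.
Qed.

Lemma dvdn_double_hh_subr j : 0 < j -> 2 * hh j %| j - hh j.
Proof.
move=> j_gt0; have -> : j - hh j = j + hh j - 2 * hh j by lia.
by rewrite dvdn_sub ?dvdn_double_hh_addr.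
Qed.

Lemma dyadic_window_uniq b a i j :
  b <= i <= a -> i - hh i < b -> a < i + hh i ->
  b <= j <= a -> j - hh j < b -> a < j + hh j -> i = j.
Proof.
wlog le_val2 : i j / val2 i <= val2 j.
  move=> IH; case: (leqP (val2 i) (val2 j)) => [/IH // | /ltnW/IH IHji *].
  exact/esym/IHji.
move=> bia window_l window_r bja _ _.
have dvd_i := hh_dvdn i; have dvd_j := hh_dvdn_of_val2 le_val2.
case: (ltngtP i j) => // [lt_ij | lt_ji].
- have := dvdn_leq _ (dvdn_sub dvd_j dvd_i); clear dvd_i dvd_j; lia.
- have := dvdn_leq _ (dvdn_sub dvd_i dvd_j); clear dvd_i dvd_j; lia.
Qed.

Lemma dyadic_window_exists b a : 0 < b <= a ->
  exists i, [/\ b <= i <= a, i - hh i < b & a < i + hh i].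
Proof.
move=> /andP[b_gt0 le_ba].
have [j /= le_bj max_j] := @arg_maxnP _ (@ord_max a) (fun k => b <= k) val2 le_ba.
have j_gt0 : 0 < j by apply: leq_trans le_bj.
have out_of_range k : 0 < k -> 2 * hh j %| k -> b <= k -> a < k.
  move=> k_gt0 dvd_k le_bk; rewrite ltnNge; apply/negP => le_ka.
  have := max_j (Ordinal (le_ka : k < a.+1)) le_bk.
  by rewrite leqNgt ltn_val2_dvdn.
exists j; split; first by rewrite le_bj -ltnS ltn_ord.
- rewrite ltnNge; apply/negP => le_b.
  have := out_of_range _ (leq_trans b_gt0 le_b) (dvdn_double_hh_subr j_gt0) le_b.
  have := ltn_ord j; lia.
- by apply: out_of_range (dvdn_double_hh_addr j_gt0) _; lia.
Qed.

Lemma exists_step_up (f : nat -> nat) (s u : nat) :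
  f 0 <= u < f s -> exists2 a, a < s & f a <= u < f a.+1.
Proof.
elim: s => [|s IHs] /andP[f0_le lt_fs]; first by rewrite ltnNge f0_le in lt_fs.
case: (ltnP u (f s)) => [lt_u | le_u]; last by exists s; rewrite // le_u.
by have [|a lt_as Ha] := IHs; [rewrite f0_le | exists a => //; apply: ltnW].
Qed.

Lemma exists_step_down (f : nat -> nat) (s v : nat) :
  f s <= v < f 0 -> exists2 b, 0 < b <= s & f b <= v < f b.-1.
Proof.
elim: s => [|s IHs] /andP[fs_le lt_f0]; first by rewrite ltnNge fs_le in lt_f0.
case: (leqP (f s) v) => [le_v | lt_v]; last by exists s.+1; rewrite //= fs_le.
have [|b /andP[b_gt0 le_bs] Hb] := IHs; first by rewrite le_v.
by exists b; rewrite ?b_gt0 ?leqW.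
Qed.

Lemma index_bounds s i : 0 < i < s -> i + ll s i <= s /\ hh i <= i.
Proof.
move=> /andP[i_gt0 lt_is]; split; last exact: hh_le.
by rewrite /ll; lia.
Qed.

Section Staircase.

Variables (s : nat) (m n : nat -> nat).
Hypothesis m0 : m 0 = 0.
Hypothesis m_incr : forall k, k < s -> m k < m k.+1.
Hypothesis n_decr : forall k, k < s -> n k.+1 < n k.
Hypothesis ns : n s = 0.

Let below_s_convex : {in [pred k | k <= s] &, forall i j k, i < k < j -> k <= s}.
Proof. by move=> i j _ /[!inE] le_js k /andP[_ /ltnW le_kj]; apply: leq_trans le_js. Qed.

Lemma leq_m i j : i <= s -> j <= s -> (m i <= m j) = (i <= j).
Proof.
move=> le_is le_js; apply: (@leq_mono_in _ [pred k | k <= s]) => //.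
apply: (homo_ltn_in _ below_s_convex); first exact: ltn_trans.
by move=> k _ /[!inE]; apply: m_incr.
Qed.

Lemma leq_n i j : i <= s -> j <= s -> (n i <= n j) = (j <= i).
Proof.
move=> le_is le_js; apply: (@leq_nmono_in _ [pred k | k <= s]) => //.
move=> x y x_in y_in lt_yx.
apply: (homo_ltn_in (r := fun x y => y < x) _ below_s_convex) y_in x_in lt_yx.
  by move=> y' x' z lt_xy' lt_zx'; apply: ltn_trans lt_xy'.
by move=> k _ /[!inE]; apply: n_decr.
Qed.

Lemma inR_box i u v : 0 < i < s -> inR s m n i u v -> u < m s /\ v < n 0.
Proof.
move=> i_range [/andP[_ lt_u] /andP[_ lt_v]]; have [le_ils _] := index_bounds i_range.
have le_is : i <= s by case/andP: i_range => _ /ltnW.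
split; first by apply: leq_trans lt_u _; rewrite leq_m.
by apply: leq_trans lt_v _; rewrite leq_n // (leq_trans (leq_subr _ _)).
Qed.

Definition staircase_cell a b u v :=
  [&& a < s, 0 < b <= s, m a <= u < m a.+1 & n b <= v < n b.-1].

Lemma exists_staircase_cell u v :
  u < m s -> v < n 0 -> exists a b, staircase_cell a b u v.
Proof.
move=> lt_us lt_vn.
have [|a lt_as col] := @exists_step_up m s u; first by rewrite m0.
have [|b b_range row] := @exists_step_down n s v; first by rewrite ns.
by exists a, b; apply/and4P.
Qed.

Section Cell.

Variables (a b u v : nat).
Hypothesis cell_ab : staircase_cell a b u v.

Lemma cell_leq_m i : i <= s -> (m i <= u) = (i <= a).
Proof.
case/and4P: cell_ab => lt_as _ /andP[le_u lt_u] _ le_is.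
case: (leqP i a) => [le_ia | lt_ai]; first by apply: leq_trans le_u; rewrite leq_m // ltnW.
by apply/negbTE; rewrite -ltnNge; apply: leq_trans lt_u _; rewrite leq_m.
Qed.

Lemma cell_leq_n i : i <= s -> (n i <= v) = (b <= i).
Proof.
case/and4P: cell_ab => _ /andP[b_gt0 le_bs] _ /andP[le_v lt_v] le_is.
case: (leqP b i) => [le_bi | lt_ib]; first by apply: leq_trans _ le_v; rewrite leq_n.
apply/negbTE; rewrite -ltnNge; apply: leq_trans lt_v _.
by rewrite leq_n ?(leq_trans (leq_pred b)) // -ltnS prednK.
Qed.

Lemma in_ideal_cell : in_ideal s m n u v <-> b <= a.
Proof.
have le_as : a <= s by case/and4P: cell_ab => /ltnW.
split=> [[k [le_ks [le_mk le_nk]]] | le_ba].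
  by rewrite cell_leq_m // in le_mk; rewrite cell_leq_n // in le_nk; apply: leq_trans le_mk.
by exists a; rewrite cell_leq_m ?cell_leq_n.
Qed.

Lemma inR_cell i : 0 < i < s ->
  inR s m n i u v <-> (i <= a < i + ll s i) /\ (i - hh i < b <= i).
Proof.
move=> i_range; have [le_ils _] := index_bounds i_range.
have le_is : i <= s by case/andP: i_range => _ /ltnW.
have le_hs : i - hh i <= s := leq_trans (leq_subr _ _) le_is.
rewrite /inR [u < _]ltnNge [v < _]ltnNge !cell_leq_m ?cell_leq_n //.
by rewrite -!ltnNge [(b <= i) && _]andbC.
Qed.

End Cell.

Lemma inR_disjoint i j u v : 0 < i < s -> 0 < j < s ->
  inR s m n i u v -> inR s m n j u v -> i = j.
Proof.
move=> i_range j_range Ri Rj; have [lt_us lt_vn] := inR_box i_range Ri.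
have [a [b cell_ab]] := exists_staircase_cell lt_us lt_vn.
move: Ri Rj; rewrite !(inR_cell cell_ab) //.
move=> [/andP[le_ia lt_ai] /andP[lt_bi le_bi]] [/andP[le_ja lt_aj] /andP[lt_bj le_bj]].
have ll_le k : ll s k <= hh k by apply: geq_minl.
apply: (@dyadic_window_uniq b a) => //; rewrite ?le_bi ?le_bj //.
- by apply: leq_trans lt_ai _; rewrite leq_add2l.
- by apply: leq_trans lt_aj _; rewrite leq_add2l.
Qed.

Lemma inS_cover u v : inS s m n u v <-> exists2 i, 0 < i < s & inR s m n i u v.
Proof.
split=> [[lt_us [lt_vn not_inT]] | [i i_range Ri]].
  have [a [b cell_ab]] := exists_staircase_cell lt_us lt_vn.
  have le_ba : b <= a.
    by case: leqP => // lt_ab; case: not_inT => /(in_ideal_cell cell_ab); rewrite leqNgt lt_ab.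
  have b_gt0 : 0 < b by case/and4P: cell_ab => _ /andP[].
  have lt_as : a < s by case/and4P: cell_ab.
  have [|i [/andP[le_bi le_ia] lt_b lt_a]] := @dyadic_window_exists b a; first by rewrite b_gt0.
  have i_range : 0 < i < s by rewrite (leq_trans b_gt0 le_bi) (leq_ltn_trans le_ia lt_as).
  exists i; rewrite // (inR_cell cell_ab) // le_ia le_bi lt_b.
  by split => //; rewrite /ll; lia.
have [lt_us lt_vn] := inR_box i_range Ri.
have [a [b cell_ab]] := exists_staircase_cell lt_us lt_vn.
move: Ri; rewrite (inR_cell cell_ab) // => -[/andP[le_ia _] /andP[_ le_bi]].
by do 2!split => //; case; apply/(in_ideal_cell cell_ab); apply: leq_trans le_ia.
Qed.

End Staircase.

Theorem mainTheorem3 (s : nat) (m n : nat -> nat) :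
  1 <= s ->
  m 0 = 0 ->
  (forall k, k < s -> m k < m k.+1) ->
  (forall k, k < s -> n k.+1 < n k) ->
  n s = 0 ->
  [/\ (forall i, 0 < i < s -> i + ll s i <= s /\ hh i <= i),
      (forall i j u v, 0 < i < s -> 0 < j < s -> i <> j ->
          inR s m n i u v -> ~ inR s m n j u v)
    & (forall u v, inS s m n u v <-> exists2 i, 0 < i < s & inR s m n i u v)].
Proof.
move=> _ m0 m_incr n_decr ns; split.
- exact: index_bounds.
- move=> i j u v i_range j_range neq_ij Ri Rj; apply: neq_ij.
  exact: (inR_disjoint m0 m_incr n_decr ns i_range j_range Ri Rj).
- exact: (inS_cover m0 m_incr n_decr ns).
Qed.
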